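(* For each positive integer $n$, the number of acyclic directed graphs on the vertex set $\{1,\dots,n\}$ is equal to the number of $n\times n$ matrices with entries in $\{0,1\}$ all of whose (complex) eigenvalues are positive real numbers.
   Context: A directed graph (digraph) on vertex set $\{1,\dots,n\}$ has, for each ordered pair $(i,j)$ with $1\le i,j\le n$, at most one edge directed from $i$ to $j$; loops (edges from $i$ to $i$) and pairs of opposite edges are permitted, parallel edges are not. A digraph is acyclic if it contains no directed cycle of any length, including cycles of length $1$ (loops) and length $2$. *)

From HB Require Import structures.
From mathcomp Require Import all_boot all_order all_algebra all_field.
Set Implicit Arguments. Unset Strict Implicit. Unset Printing Implicit Defensive.
Import Order.TTheory GRing.Theory Num.Theory.

(* A digraph on 'I_n (vertices 0..n-1, standing for 1..n) is its edge set:
   a set of ordered pairs (i, j); loops and opposite pairs are allowed,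
   parallel edges are impossible by construction. *)
Definition digraph (n : nat) := {set 'I_n * 'I_n}.

Definition edge_rel (n : nat) (E : digraph n) : rel 'I_n :=
  fun i j => (i, j) \in E.

(* Acyclic: no directed cycle of any length >= 1 (a cycle of length 1 is a
   loop, of length 2 a pair of opposite edges).  [cycle e (x :: p)] means
   x -> p_1 -> ... -> p_k -> x. *)
Definition acyclic (n : nat) (E : digraph n) : Prop :=
  forall (s : seq 'I_n), s != [::] -> ~~ cycle (edge_rel E) s.

Definition to_C (n : nat) (A : 'M[bool]_n) : 'M[algC]_n :=
  map_mx (fun b : bool => (b%:R : algC)%R) A.

(* All complex eigenvalues are positive real numbers.  In algC, 0 < z
   forces z to be real. *)
Definition all_eigs_pos (n : nat) (A : 'M[bool]_n) : Prop :=
  forall z : algC, eigenvalue (to_C A) z -> (0 < z)%R.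

From Stdlib Require Import ClassicalEpsilon.
Definition asb (P : Prop) : bool :=
  if excluded_middle_informative P then true else false.

From HB Require Import structures.
From mathcomp Require Import all_boot all_order all_algebra all_field.
Import Order.TTheory GRing.Theory Num.Theory.
Set Implicit Arguments. Unset Strict Implicit. Unset Printing Implicit Defensive.

(* Adding a loop at every vertex turns a digraph E into the 0/1 matrix
   I + adj E.  E is acyclic iff adj E is nilpotent, and then every eigenvalue
   of I + adj E equals 1.  Conversely, if all eigenvalues of a 0/1 matrix A
   are positive, their product det A is a positive integer, hence at least 1,
   while their sum tr A is at most n; by AM-GM all eigenvalues equal 1.  So
   tr A = n, i.e. the diagonal of A is all ones, and by Cayley-Hamilton
   A - I is nilpotent: it is the adjacency matrix of an acyclic digraph. *)

Local Open Scope ring_scope.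

Lemma path_notuniq_cycle (T : eqType) (e : rel T) (x : T) (p : seq T) :
  path e x p -> ~~ uniq (x :: p) -> exists2 s, s != [::] & cycle e s.
Proof.
elim: p x => [|y p IHp] x // e_xp; rewrite [uniq _]/= negb_and negbK.
case/orP => [x_yp|]; last by apply: IHp; case/andP: e_xp.
move: e_xp; case/splitPr: x_yp => p1 p2; rewrite cat_path /= => /and3P[e_xp1 e_x _].
by exists (x :: p1); rewrite //= rcons_path e_xp1.
Qed.

Section MatrixPowerPaths.
Variables (R : pzRingType) (n : nat) (M : 'M[R]_n).

Lemma mxpow_neq0_path k i j : (M ^+ k) i j != 0 ->
  exists p, [/\ size p = k, path (fun a b => M a b != 0) i p & last i p = j].
Proof.
elim: k i => [|k IHk] i.
  rewrite expr0 mxE; case: (eqVneq i j) => [->|_]; last by rewrite mulr0n eqxx.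
  by exists [::].
rewrite exprS mxE => Mkij.
have [l /andP[Mil /IHk[p [<- Mp <-]]]] :
    exists l, (M i l != 0) && ((M ^+ k) l j != 0).
  apply/existsP; apply: contraNT Mkij => /existsPn M0; apply/eqP/big1 => l _.
  by move: (M0 l); rewrite negb_and !negbK => /orP[]/eqP->; rewrite ?mul0r ?mulr0.
by exists (l :: p); rewrite /= Mil Mp.
Qed.

End MatrixPowerPaths.

Section NonnegMatrix.
Variables (R : numDomainType) (n : nat) (M : 'M[R]_n).
Hypothesis M_ge0 : forall i j, 0 <= M i j.

Lemma mxpow_ge0 k i j : 0 <= (M ^+ k) i j.
Proof.
elim: k i j => [|k IHk] i j; first by rewrite expr0 mxE ler0n.
by rewrite exprS mxE sumr_ge0 // => l _; rewrite mulr_ge0.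
Qed.

Lemma mxpowD_ge a b i l j : (M ^+ a) i l * (M ^+ b) l j <= (M ^+ (a + b)) i j.
Proof.
rewrite exprD mxE (bigD1 l) //= lerDl sumr_ge0 // => l' _.
by rewrite mulr_ge0 ?mxpow_ge0.
Qed.

Lemma mxpowM_diag_ge a k x : (M ^+ a) x x ^+ k <= (M ^+ (a * k)) x x.
Proof.
elim: k => [|k IHk]; first by rewrite muln0 !expr0 mxE eqxx.
rewrite exprS mulnS; apply: le_trans (mxpowD_ge _ _ x x x).
by rewrite ler_wpM2l ?mxpow_ge0.
Qed.

Lemma path_mxpow_ge1 i p : path (fun a b => 1 <= M a b) i p ->
  1 <= (M ^+ size p) i (last i p).
Proof.
elim: p i => [|j p IHp] i /=; first by rewrite expr0 mxE eqxx.
case/andP=> Mij /IHp Mp; rewrite -add1n; apply: le_trans (mxpowD_ge 1 _ i j _).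
by rewrite expr1 mulr_ege1.
Qed.

Lemma nilpotent_mx_cycle_free k : M ^+ k = 0 ->
  forall s, s != [::] -> ~~ cycle (fun a b => 1 <= M a b) s.
Proof.
move=> Mk0 [//|x p] _; apply/negP; rewrite /cycle => /path_mxpow_ge1.
rewrite size_rcons last_rcons => /(exprn_ege1 k).
move/le_trans/(_ (mxpowM_diag_ge _ _ _)).
by rewrite mulnC exprM Mk0 expr0n mxE ler10.
Qed.

End NonnegMatrix.

Section Adjacency.
Variables (R : numDomainType) (n : nat).

Definition adj_mx (E : digraph n) : 'M[R]_n := \matrix_(i, j) ((i, j) \in E)%:R.

Lemma adj_mx_ge0 E i j : 0 <= adj_mx E i j.
Proof. by rewrite mxE ler0n. Qed.

Lemma adj_mx_ge1 E : edge_rel E =2 (fun i j => 1 <= adj_mx E i j).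
Proof.
by move=> i j; rewrite mxE /edge_rel; case: ((i, j) \in E); rewrite ?lexx ?ler10.
Qed.

Lemma adj_mx_neq0 E : edge_rel E =2 (fun i j => adj_mx E i j != 0).
Proof. by move=> i j; rewrite mxE pnatr_eq0 eqb0 negbK. Qed.

Lemma acyclic_adj_mx_nilpotent E : acyclic E <-> adj_mx E ^+ n = 0.
Proof.
split=> [acE | nilE s s0]; last first.
  by rewrite (eq_cycle (adj_mx_ge1 E)) (nilpotent_mx_cycle_free (adj_mx_ge0 E) nilE).
apply/matrixP => i j; rewrite mxE; apply: contraTeq isT => /mxpow_neq0_path[p [szp]].
rewrite -(eq_path (adj_mx_neq0 E)) => Ep _.
have [|s s0] := path_notuniq_cycle Ep; last by move/negP: (acE s s0).
apply: contraL (max_card (mem (i :: p))) => /card_uniqP->.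
by rewrite card_ord /= szp ltnn.
Qed.

End Adjacency.

Lemma eigenvalue_unipotent (F : fieldType) n (N : 'M[F]_n) k z :
  N ^+ k = 0 -> eigenvalue (1%:M + N) z -> z = 1.
Proof.
move=> Nk0 /eigenvalueP[v]; rewrite mulmxDr mul_mx_scalar scale1r => vNz v0.
have vN : v *m N = (z - 1) *: v by rewrite scalerBl scale1r -vNz addrC addKr.
have vNX m : v *m N ^+ m = (z - 1) ^+ m *: v.
  elim: m => [|m IHm]; first by rewrite expr0 scale1r mulmx1.
  by rewrite exprSr -mulmxE mulmxA IHm -scalemxAl vN scalerA -exprSr.
move/eqP: (vNX k); rewrite Nk0 mulmx0 eq_sym scaler_eq0 (negbTE v0) orbF.
by rewrite expf_eq0 subr_eq0 => /andP[_ /eqP].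
Qed.

Section DigraphMatrix.
Variable n : nat.

Definition mx_of_digraph (E : digraph n) : 'M[bool]_n :=
  \matrix_(i, j) ((i == j) || ((i, j) \in E)).

Definition digraph_of_mx (A : 'M[bool]_n) : digraph n :=
  [set e | (e.1 != e.2) && A e.1 e.2].

Lemma acyclic_loopfree (E : digraph n) i : acyclic E -> (i, i) \notin E.
Proof. by move/(_ [:: i] isT); rewrite /= /edge_rel andbT. Qed.

Lemma mx_of_digraphK (E : digraph n) :
  acyclic E -> digraph_of_mx (mx_of_digraph E) = E.
Proof.
move=> acE; apply/setP => -[i j]; rewrite inE mxE /=.
by case: eqVneq => [->|]; rewrite ?(negbTE (acyclic_loopfree j acE)).
Qed.

Lemma digraph_of_mxK (A : 'M[bool]_n) :
  (forall i, A i i) -> mx_of_digraph (digraph_of_mx A) = A.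
Proof.
move=> Aii; apply/matrixP => i j; rewrite !mxE inE /=.
by case: eqVneq => [->|]; rewrite ?Aii.
Qed.

Lemma to_C_mx_of_digraph (E : digraph n) :
  acyclic E -> to_C (mx_of_digraph E) = 1%:M + adj_mx algC E.
Proof.
move=> acE; apply/matrixP => i j; rewrite !mxE.
case: eqVneq => [->|_]; last by rewrite add0r.
by rewrite (negbTE (acyclic_loopfree j acE)) addr0.
Qed.

Lemma adj_digraph_of_mx (A : 'M[bool]_n) :
  (forall i, A i i) -> adj_mx algC (digraph_of_mx A) = to_C A - 1%:M.
Proof.
move=> Aii; apply/matrixP => i j; rewrite !mxE inE /=.
by case: eqVneq => [->|_]; rewrite ?Aii ?subrr ?subr0.
Qed.

Lemma all_eigs_pos_acyclic (E : digraph n) :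
  acyclic E -> all_eigs_pos (mx_of_digraph E).
Proof.
move=> acE z; rewrite to_C_mx_of_digraph //.
have /(acyclic_adj_mx_nilpotent algC) nilE := acE.
by move/(eigenvalue_unipotent nilE)->; rewrite ltr01.
Qed.

End DigraphMatrix.

Lemma eq1_of_prod_ge1_sum_le (F : numFieldType) (rs : seq F) :
  {in rs, forall z, 0 <= z} -> 1 <= \prod_(z <- rs) z ->
  \sum_(z <- rs) z <= (size rs)%:R -> rs = nseq (size rs) 1.
Proof.
move=> rs_ge0 prod_ge1 sum_le; set k := size rs.
have [k0|k_gt0] := posnP k; first by rewrite /k (size0nil k0).
pose E (i : 'I_k) := rs`_i.
have E_ge0 : {in predT, forall i, 0 <= E i} by move=> i _; apply/rs_ge0/mem_nth.
have prodE : \prod_(z <- rs) z = \prod_(i in predT) E i.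
  by rewrite (big_nth 0) big_mkord.
have sumE : \sum_(z <- rs) z = \sum_(i in predT) E i.
  by rewrite (big_nth 0) big_mkord.
(* AM-GM: prod <= mean ^+ k <= 1 <= prod, so equality holds throughout. *)
have [AGM_le AGM_eq] := leif_AGM E_ge0.
rewrite card_ord -prodE -sumE in AGM_le AGM_eq.
have mu_k_le1 : ((\sum_(z <- rs) z) / k%:R) ^+ k <= 1.
  apply: exprn_ile1; first by rewrite divr_ge0 ?ler0n // sumE sumr_ge0.
  by rewrite ler_pdivrMr ?ltr0n // mul1r.
have prod1 : \prod_(z <- rs) z = 1.
  by apply/eqP; rewrite eq_le (le_trans AGM_le mu_k_le1).
have /forall_inP Eeq : [forall i in predT, forall j in predT, E i == E j].
  by rewrite -AGM_eq eq_le AGM_le (le_trans mu_k_le1).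
pose i0 := Ordinal k_gt0.
have Ei0 i : E i = E i0 by apply/eqP; move/forall_inP: (Eeq i isT); apply.
have /eqP : E i0 ^+ k = 1.
  by rewrite -prod1 prodE (eq_bigr _ (fun i _ => Ei0 i)) prodr_const card_ord.
rewrite pexpr_eq1 ?E_ge0 // => /eqP Ei0_1.
apply/all_pred1P/(all_nthP 0) => i lt_ik /=.
by rewrite -Ei0_1 -(Ei0 (Ordinal lt_ik)).
Qed.

Section SplitCharPoly.
Variables (R : comNzRingType) (n : nat) (B : 'M[R]_n) (rs : seq R).
Hypothesis charB : char_poly B = \prod_(z <- rs) ('X - z%:P).

Lemma size_char_poly_roots : size rs = n.
Proof. by have := size_char_poly B; rewrite charB size_prod_XsubC => -[]. Qed.

Lemma det_char_poly_roots : \det B = \prod_(z <- rs) z.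
Proof.
apply: (@lreg_sign _ n); rewrite -char_poly_det charB coef0_prod_XsubC.
by rewrite size_char_poly_roots.
Qed.

Lemma trace_char_poly_roots : (0 < n)%N -> \tr B = \sum_(z <- rs) z.
Proof.
move=> n_gt0; apply: oppr_inj; rewrite -char_poly_trace // charB.
by rewrite -coefPn_prod_XsubC size_char_poly_roots // -lt0n.
Qed.

End SplitCharPoly.

Lemma mxtrace_to_C_leif n (A : 'M[bool]_n) :
  \tr (to_C A) <= n%:R ?= iff [forall i, A i i].
Proof.
have -> : n%:R = \sum_(i < n) (1 : algC) by rewrite sumr_const card_ord.
apply: (leif_sum (C := fun i => A i i)) => i _; rewrite mxE.
by case: (A i i); split; rewrite /= ?lexx ?ler01 ?eqxx // eq_sym oner_eq0.
Qed.

Lemma det_to_C_ge1 n (A : 'M[bool]_n) :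
  0 < \det (to_C A) -> 1 <= \det (to_C A).
Proof.
have -> : to_C A = map_mx intr (map_mx (fun b : bool => b%:R : int) A).
  by apply/matrixP => i j; rewrite !mxE; case: (A i j).
by rewrite det_map_mx ltr0z ler1z gtz0_ge1.
Qed.

Lemma all_eigs_pos_char_poly n (A : 'M[bool]_n.+1) : all_eigs_pos A ->
  char_poly (to_C A) = \prod_(z <- nseq n.+1 1) ('X - z%:P).
Proof.
move=> Apos; set B := to_C A.
have [rs] := closed_field_poly_normal (char_poly B).
rewrite (monicP (char_poly_monic B)) scale1r => charB.
have size_rs := size_char_poly_roots charB.
have rs_gt0 z : z \in rs -> 0 < z.
  by move=> rs_z; apply: Apos; rewrite eigenvalue_root_char charB root_prod_XsubC.
have prod_ge1 : 1 <= \prod_(z <- rs) z.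
  rewrite -(det_char_poly_roots charB) det_to_C_ge1 // (det_char_poly_roots charB).
  by rewrite big_seq prodr_gt0.
have sum_le : \sum_(z <- rs) z <= (size rs)%:R.
  by rewrite -(trace_char_poly_roots charB) // size_rs mxtrace_to_C_leif.
have rs_ge0 : {in rs, forall z, 0 <= z} by move=> z /rs_gt0/ltW.
by rewrite charB (eq1_of_prod_ge1_sum_le rs_ge0 prod_ge1 sum_le) size_rs.
Qed.

Lemma all_eigs_pos_unipotent n (A : 'M[bool]_n.+1) : all_eigs_pos A ->
  (forall i, A i i) /\ (to_C A - 1%:M) ^+ n.+1 = 0.
Proof.
move/all_eigs_pos_char_poly => charA; split.
  apply/forallP; rewrite -(mxtrace_to_C_leif A) (trace_char_poly_roots charA) //.
  by rewrite big_nseq iter_addr_0.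
have := Cayley_Hamilton (to_C A); rewrite charA big_nseq iter_mulr_1.
by rewrite rmorphXn rmorphB /= horner_mx_X horner_mx_C.
Qed.

Lemma asbP (P : Prop) : reflect P (asb P).
Proof.
by rewrite /asb; case: ClassicalEpsilon.excluded_middle_informative; constructor.
Qed.

Local Close Scope ring_scope.

Theorem theorem1 (n : nat) (hn : 0 < n) :
  #|[set E : digraph n | asb (acyclic E) ]| =
  #|[set A : 'M[bool]_n | asb (all_eigs_pos A) ]|.
Proof.
case: n hn => // n _.
set S := [set E | _].
have inj : {in S &, injective (@mx_of_digraph n.+1)}.
  move=> E1 E2 /[!inE] /asbP acE1 /asbP acE2.
  by move/(congr1 (@digraph_of_mx _)); rewrite !mx_of_digraphK.
rewrite -(card_in_imset inj); apply: eq_card => A; rewrite [in RHS]inE.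
apply/imsetP/asbP => [[E /[!inE] /asbP acE ->] | ].
  exact: all_eigs_pos_acyclic.
case/all_eigs_pos_unipotent => Aii nilA.
exists (digraph_of_mx A); last by rewrite digraph_of_mxK.
rewrite inE; apply/asbP/(acyclic_adj_mx_nilpotent algC).
by rewrite adj_digraph_of_mx.
Qed.
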